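(* Let $0<d<1$ and $c>0$ be constants. There is a constant $c'>0$ (depending only on $c,d$) such that the following holds. Let $m,n$ be positive integers with $n\leq m^d$ and $m\ge 2$, and suppose there is a scheme encoding every set $S\subseteq[m]$ with $|S|\leq n$ as a bit string $\phi(S)\in\{0,1\}^s$ with $s\leq c\,n\log_2 m$, together with a quantum bit-probe query algorithm that, given any query $i\in[m]$ and oracle access to $\phi(S)$, makes at most $t$ bit-probes and answers the question ''$i\in S$?'' either exactly, or with one-sided error (it always answers ''No'' when $i\notin S$, and when $i\in S$ it answers incorrectly with probability at most $\epsilon$ for some fixed $\epsilon<1$). Then $t\geq c'\log_2 m$. That is, set membership data structures using $O(n\log m)$ bits require $\Omega(\log m)$ bit-probes in this model.
   Context: $[m]=\{0,\dots,m-1\}$. Quantum bit-probe model: the algorithm operates on $\mathcal H_L\otimes\mathcal H_B\otimes\mathcal H_Z$ (address qubits indexing positions of the $s$-bit string, one data qubit, arbitrary workspace). For $x\in\{0,1\}^s$ the oracle $O_x$ acts by $|l\rangle|b\rangle|z\rangle\mapsto|l\rangle|b\oplus x_l\rangle|z\rangle$. A $t$-probe algorithm is a sequence of input-independent unitaries $U_0,\dots,U_t$; on query $i$ it starts from a fixed basis state encoding $i$, applies $U_tO_xU_{t-1}O_x\cdots U_1O_xU_0$, and measures designated output qubits in the computational basis to obtain its answer. *)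

From HB Require Import structures.
From mathcomp Require Import all_boot all_order all_algebra.
From mathcomp Require Import all_classical all_reals all_analysis.
From mathcomp Require complex.
Import complex.ComplexField.

Set Implicit Arguments.
Unset Strict Implicit.
Unset Printing Implicit Defensive.
Import Order.TTheory GRing.Theory Num.Theory.
Local Open Scope ring_scope.

Section QBitProbe.
Variable R : realType.
Local Notation C := (complex.complex R).

(* s = length of the stored bit string, w = dimension of the workspace.
   Computational basis of H_L (x) H_B (x) H_Z is indexed by 'I_s * bool * 'I_w. *)
Variables s w : nat.
Definition qidx := ('I_s * bool * 'I_w)%type.

Definition qstate := qidx -> C.

(* an operator given by its matrix entries U k j = <k|U|j> *)
Definition qop := qidx -> qidx -> C.

(* U is unitary: U^dagger U = I  (finite dimension, so also U U^dagger = I) *)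
Definition unitary (U : qop) : Prop :=
  forall i j : qidx,
    \sum_(k : qidx) complex.conjc (U k i) * U k j = (i == j)%:R.

Definition applyOp (U : qop) (psi : qstate) : qstate :=
  fun k => \sum_(j : qidx) U k j * psi j.

(* the oracle O_x : |l>|b>|z> |-> |l>|b xor x_l>|z>  (a permutation of the basis,
   which is an involution, so acting on amplitudes by the same substitution) *)
Definition oracle (x : 'I_s -> bool) (psi : qstate) : qstate :=
  fun k => let: (l, b, z) := k in psi (l, addb b (x l), z).

Definition basis (k0 : qidx) : qstate := fun k => (k == k0)%:R.

Fixpoint run (U : nat -> qop) (x : 'I_s -> bool) (r : nat) (psi : qstate)
  : qstate :=
  match r with
  | 0 => applyOp (U 0%N) psi
  | r'.+1 => applyOp (U r) (oracle x (run U x r' psi))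
  end.

Definition sqmod (a : C) : R := complex.Re a ^+ 2 + complex.Im a ^+ 2.

Definition prob_accept (out : qidx -> bool) (psi : qstate) : R :=
  \sum_(k : qidx | out k) sqmod (psi k).

(* A t-probe quantum bit-probe algorithm for queries in 'I_m:
   unitaries U_0..U_t, initial basis state init i for query i, and the
   answer "Yes" is read off the measured output qubits via [out]. *)
Record qalgo (m t : nat) := QAlgo {
  qa_U : nat -> qop;
  qa_unitary : forall r, (r <= t)%N -> unitary (qa_U r);
  qa_init : 'I_m -> qidx;
  qa_out : qidx -> bool
}.

Definition qa_yes (m t : nat) (A : qalgo m t) (x : 'I_s -> bool) (i : 'I_m) : R :=
  prob_accept (qa_out A) (run (qa_U A) x t (basis (qa_init A i))).

End QBitProbe.

Definition log2 (R : realType) (x : R) : R := ln x / ln 2.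

(* A set-membership scheme for subsets of [m] of size at most n, stored in
   s bits, with a t-probe quantum query algorithm with one-sided error eps
   (eps = 0 is the exact case). *)
Definition one_sided_membership (R : realType) (m n s w t : nat)
    (phi : {set 'I_m} -> 'I_s -> bool) (A : @qalgo R s w m t) (eps : R) : Prop :=
  forall S : {set 'I_m}, (#|S| <= n)%N ->
    forall i : 'I_m,
      (i \notin S -> qa_yes A (phi S) i = 0) /\
      (i \in S -> 1 - eps <= qa_yes A (phi S) i).

From Pilot Require Import Defs.
From HB Require Import structures.
From mathcomp Require Import all_boot all_order all_algebra.
From mathcomp Require Import all_classical all_reals all_analysis.
From mathcomp Require complex.
From mathcomp Require Import ring lra zify.
Import complex.ComplexField.
Import Order.TTheory GRing.Theory Num.Theory.
Local Open Scope ring_scope.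
Set Implicit Arguments. Unset Strict Implicit. Unset Printing Implicit Defensive.

(** Polynomial method. After r probes every amplitude is a multilinear
  polynomial of degree at most r in the stored bits, so the acceptance
  probability has degree at most 2t, and for |S| = n the product of the
  acceptance probabilities of the elements of S has degree at most 2tn.
  Evaluating these products at the encodings phi(T), |T| = n, gives a matrix
  which one-sided error makes diagonal with a nonzero diagonal; since it
  factors through the monomials of degree at most 2tn, their number
  sum_(k <= 2tn) C(s, k) <= (1+lam)^s / lam^(2tn) is at least
  C(m, n) >= (m/n)^n. Taking logarithms with s = O(n log m), n <= m^d and a
  small constant lam yields t = Omega(log m). *)

Section MultilinearDegree.
Variables (T : comNzRingType) (s : nat).

Definition monomial (A : {set 'I_s}) (x : 'I_s -> bool) : T :=
  (A \subset [set l | x l])%:R.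

Definition deg_le (K : nat) (f : ('I_s -> bool) -> T) : Prop :=
  exists a : {set 'I_s} -> T, (forall A : {set 'I_s}, (K < #|A|)%N -> a A = 0) /\
    forall x, f x = \sum_(A : {set 'I_s}) a A * monomial A x.

Lemma deg_le_ext K f g : f =1 g -> deg_le K f -> deg_le K g.
Proof. by move=> fg [a [ha hf]]; exists a; split=> // x; rewrite -fg. Qed.

Lemma deg_le_leq K K' f : (K <= K')%N -> deg_le K f -> deg_le K' f.
Proof. by move=> KK' [a [ha hf]]; exists a; split=> // A HA; apply/ha/(leq_ltn_trans KK' HA). Qed.

Lemma deg_le0 K : deg_le K (fun _ => 0).
Proof. by exists (fun _ => 0); split=> // x; rewrite big1 // => A _; rewrite mul0r. Qed.

Lemma deg_leD K f g : deg_le K f -> deg_le K g -> deg_le K (fun x => f x + g x).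
Proof.
move=> [a [ha hf]] [b [hb hg]]; exists (fun A => a A + b A); split.
  by move=> A HA; rewrite ha // hb // addr0.
by move=> x; rewrite hf hg -big_split /=; apply: eq_bigr => A _; rewrite mulrDl.
Qed.

Lemma deg_le_monomial K (C : {set 'I_s}) (c : T) :
  (#|C| <= K)%N -> deg_le K (fun x => c * monomial C x).
Proof.
move=> HC; exists (fun A => if A == C then c else 0); split.
  by move=> A; case: eqP => // ->; rewrite ltnNge HC.
move=> x; rewrite (bigD1 C) //= eqxx big1 ?addr0 // => A /negbTE ->.
by rewrite mul0r.
Qed.

Lemma deg_le_cst K (c : T) : deg_le K (fun _ => c).
Proof.
apply: deg_le_ext (deg_le_monomial c (_ : #|@finset.set0 'I_s| <= K)%N); last by rewrite cards0.
by move=> x; rewrite /monomial finset.sub0set mulr1.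
Qed.

Lemma deg_leZ K (c : T) f : deg_le K f -> deg_le K (fun x => c * f x).
Proof.
move=> [a [ha hf]]; exists (fun A => c * a A); split.
  by move=> A HA; rewrite ha // mulr0.
by move=> x; rewrite hf big_distrr /=; apply: eq_bigr => A _; rewrite mulrA.
Qed.

Lemma deg_le_sum K (I : eqType) (r : seq I) (P : pred I) F :
  (forall i, deg_le K (F i)) -> deg_le K (fun x => \sum_(i <- r | P i) F i x).
Proof.
move=> HF; elim: r => [|i r IH].
  by apply: deg_le_ext (deg_le0 K) => x; rewrite big_nil.
case Pi: (P i).
  by apply: deg_le_ext (deg_leD (HF i) IH) => x; rewrite big_cons Pi.
by apply: deg_le_ext IH => x; rewrite big_cons Pi.
Qed.

Lemma monomialM (A B : {set 'I_s}) x :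
  monomial A x * monomial B x = monomial (A :|: B) x.
Proof.
rewrite /monomial finset.subUset.
by case: (A \subset _); case: (B \subset _); rewrite ?mulr1 ?mulr0.
Qed.

Lemma deg_leM a b f g : deg_le a f -> deg_le b g ->
  deg_le (a + b) (fun x => f x * g x).
Proof.
move=> [af [haf hf]] [ag [hag hg]].
apply: (@deg_le_ext _ (fun x => \sum_(A : {set 'I_s}) \sum_(B : {set 'I_s})
                          (af A * ag B) * monomial (A :|: B) x)).
  move=> x; rewrite hf hg big_distrl /=; apply: eq_bigr => A _.
  rewrite big_distrr /=; apply: eq_bigr => B _.
  by rewrite -monomialM mulrACA.
apply: deg_le_sum => A; apply: deg_le_sum => B.
have [HA|HA] := leqP #|A| a; last first.
  by apply: deg_le_ext (deg_le0 _) => x; rewrite haf // !mul0r.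
have [HB|HB] := leqP #|B| b; last first.
  by apply: deg_le_ext (deg_le0 _) => x; rewrite hag // mulr0 mul0r.
by apply/deg_le_monomial/(leq_trans (leq_card_setU A B)); apply: leq_add.
Qed.

Lemma deg_le_prod K (I : eqType) (r : seq I) F :
  (forall i, deg_le K (F i)) ->
  deg_le (size r * K) (fun x => \prod_(i <- r) F i x).
Proof.
move=> HF; elim: r => [|i r IH].
  by apply: deg_le_ext (deg_le_cst 0 1) => x; rewrite big_nil.
apply: (@deg_le_leq (K + size r * K)); first by rewrite mulSn.
by apply: deg_le_ext (deg_leM (HF i) IH) => x; rewrite big_cons.
Qed.

End MultilinearDegree.
Arguments monomial {T s} A x.

Lemma deg_le_additive (T1 T2 : comNzRingType) s K (g : T1 -> T2) f :
  g 0 = 0 -> {morph g : a b / a + b} ->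
  @deg_le T1 s K f -> deg_le K (fun x => g (f x)).
Proof.
move=> g0 gD [a [ha hf]]; exists (fun A => g (a A)); split.
  by move=> A HA; rewrite ha.
move=> x; rewrite hf (big_morph g gD g0); apply: eq_bigr => A _.
by rewrite /monomial; case: (A \subset _); rewrite ?mulr1 ?mulr0.
Qed.

Section ProbeDegree.
Variables (R : realType) (s w : nat).
Local Notation C := (complex.complex R).

Lemma oracle_amplitude (x : 'I_s -> bool) (psi : qstate R s w) l b z :
  oracle x psi (l, b, z) =
    monomial [set l] x * psi (l, ~~ b, z) + (1 - monomial [set l] x) * psi (l, b, z).
Proof. by rewrite /monomial finset.sub1set inE /=; case: (x l); case: b => /=; ring. Qed.

Lemma run_deg_le (U : nat -> qop R s w) r (k0 k : qidx s w) :
  deg_le r (fun x => run U x r (@Defs.basis R s w k0) k).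
Proof.
elim: r k => [|r IH] k.
  exact: deg_le_ext (deg_le_cst s 0 (run U (fun _ => false) 0 (@Defs.basis R s w k0) k)).
apply: deg_le_sum => -[[l b] z]; apply: deg_leZ.
have l1 : (#|[set l]| <= 1)%N by rewrite cards1.
apply: deg_le_ext (fun x => esym (oracle_amplitude x _ l b z)) _.
rewrite -add1n; apply: deg_leD; apply: deg_leM (IH _).
  by apply: deg_le_ext (deg_le_monomial 1 l1) => x; rewrite mul1r.
apply: deg_le_ext (deg_leD (deg_le_cst _ _ 1) (deg_le_monomial (-1) l1)) => x.
by rewrite mulN1r.
Qed.

Lemma qa_yes_deg_le m t (A : qalgo R s w m t) i :
  deg_le (t + t) (fun x => qa_yes A x i).
Proof.
rewrite /qa_yes /prob_accept; apply: deg_le_sum => k.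
have ReD : {morph @complex.Re R : a b / a + b} by case=> ? ?; case.
have ImD : {morph @complex.Im R : a b / a + b} by case=> ? ?; case.
have amp := run_deg_le (qa_U A) t (qa_init A i) k.
have HRe := deg_le_additive (erefl : complex.Re (0 : C) = 0) ReD amp.
have HIm := deg_le_additive (erefl : complex.Im (0 : C) = 0) ImD amp.
apply: deg_le_ext (deg_leD (deg_leM HRe HRe) (deg_leM HIm HIm)) => x.
by rewrite /sqmod !expr2.
Qed.

End ProbeDegree.

Lemma card_le_of_diagonal_factorization (F : fieldType) (I J : finType)
    (Q : pred I) (P : pred J) (f : I -> I -> F) (a : I -> J -> F) (g : J -> I -> F) :
  {in Q, forall u v, f u v = \sum_(j in P) a u j * g j v} ->
  {in Q &, forall u v, (f u v != 0) = (u == v)} ->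
  (#|Q| <= #|P|)%N.
Proof.
move=> hf hdiag.
pose M := \matrix_(u < #|Q|, v < #|Q|) f (enum_val u) (enum_val v).
pose Ma := \matrix_(u < #|Q|, j < #|P|) a (enum_val u) (enum_val j).
pose Mg := \matrix_(j < #|P|, v < #|Q|) g (enum_val j) (enum_val v).
have M_factor : M = Ma *m Mg.
  apply/matrixP => u v; rewrite !mxE hf ?enum_valP // big_enum_val.
  by apply: eq_bigr => j _; rewrite !mxE.
have M_diag : M = diag_mx (\row_u f (enum_val u) (enum_val u)).
  apply/matrixP => u v; rewrite !mxE; case: eqP => [->|neq_uv]; first by rewrite mulr1n.
  apply/eqP; rewrite mulr0n -[_ == 0]negbK hdiag ?enum_valP //.
  by apply/eqP => /enum_val_inj.
have rank_M : \rank M = #|Q|.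
  apply: mxrank_unit; rewrite unitmxE unitfE M_diag det_diag.
  by apply/prodf_neq0 => u _; rewrite mxE hdiag ?enum_valP.
by rewrite -rank_M M_factor (leq_trans (mxrankM_maxr _ _) (rank_leq_row _)).
Qed.

Definition low_monomials s K : pred {set 'I_s} := fun B => (#|B| <= K)%N.
Arguments low_monomials : clear implicits.

Lemma card_low_monomials_le (R : realFieldType) s K (lam : R) :
  0 <= lam -> lam <= 1 -> lam ^+ K * #|low_monomials s K|%:R <= (1 + lam) ^+ s.
Proof.
move=> lam0 lam1; rewrite -sumr_const mulr_sumr.
apply: (@le_trans _ _ (\sum_(B : {set 'I_s}) lam ^+ #|B|)).
  rewrite [X in _ <= X](bigID (low_monomials s K)) /= -[X in X <= _]addr0.
  apply: lerD; first by apply: ler_sum => B HB; rewrite mulr1 ler_wiXn2l.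
  by apply: sumr_ge0 => B _; rewrite exprn_ge0.
have := @bigA_distr R 0 1 *%R +%R _ (fun _ : 'I_s => lam) (fun _ => 1).
rewrite prodr_const card_ord addrC => ->.
rewrite le_eqVlt; apply/orP; left; apply/eqP/eq_bigr => B _.
by rewrite -big_mkcond /= prodr_const.
Qed.

Lemma ratio_exp_le_bin (R : realFieldType) m n : (n <= m)%N ->
  (m%:R / n%:R) ^+ n <= 'C(m, n)%:R :> R.
Proof.
elim: n m => [|n IH] m le_nm; first by rewrite expr0 bin0.
case: m le_nm => // m; rewrite ltnS => le_nm.
have binS : 'C(m.+1, n.+1)%:R = m.+1%:R / n.+1%:R * 'C(m, n)%:R :> R.
  have /(congr1 (fun k => k%:R : R)) := mul_bin_diag m.+1 n.
  rewrite !natrM => binE; apply: (@mulfI _ n.+1%:R); first by rewrite pnatr_eq0.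
  by rewrite -binE mulrA mulrCA mulfV ?mulr1 // pnatr_eq0.
rewrite binS exprS; apply: ler_wpM2l; first by rewrite divr_ge0.
apply: le_trans (IH _ le_nm).
case: n {IH binS} le_nm => [|n] le_nm; first by rewrite !expr0.
apply: lerXn2r; rewrite ?nnegrE ?divr_ge0 //.
rewrite ler_pdivrMr ?ltr0n // mulrAC ler_pdivlMr ?ltr0n // -!natrM ler_nat; nia.
Qed.

Section OneSidedMembership.
Variables (R : realType) (m n s w t : nat) (eps : R).
Variables (phi : {set 'I_m} -> 'I_s -> bool) (A : qalgo R s w m t).
Hypotheses (eps_lt1 : eps < 1) (hmem : one_sided_membership n phi A eps).

Lemma prod_qa_yes_neq0 (u v : {set 'I_m}) : #|u| = n -> #|v| = n ->
  (\prod_(i in u) qa_yes A (phi v) i != 0) = (u == v).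
Proof.
move=> card_u card_v; have [<-|neq_uv] := eqVneq u v.
  apply/lt0r_neq0/prodr_gt0 => i iu.
  have [_ /(_ iu) yes_i] := hmem (eq_leq card_u) i.
  by apply: lt_le_trans yes_i; rewrite subr_gt0.
have /subsetPn [i iu niv] : ~~ (u \subset v).
  by apply: contra neq_uv => suv; rewrite eqEcard suv card_u card_v leqnn.
by rewrite (bigD1 i) //= (proj1 (hmem (eq_leq card_v) i) niv) mul0r eqxx.
Qed.

Lemma bin_le_card_low_monomials : ('C(m, n) <= #|low_monomials s (n * (t + t))|)%N.
Proof.
have deg_prod (u : {set 'I_m}) :
    deg_le (#|u| * (t + t)) (fun x => \prod_(i in u) qa_yes A x i).
  rewrite cardE; apply: deg_le_ext (deg_le_prod _ (fun i => qa_yes_deg_le A i)).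
  by move=> x; rewrite big_enum.
have [a ha] := fin_all_exists deg_prod.
pose n_subsets := [pred u : {set 'I_m} | #|u| == n].
have -> : 'C(m, n) = #|n_subsets|.
  by rewrite -[m in LHS]card_ord -card_draws; apply: eq_card => u; rewrite inE.
apply: (@card_le_of_diagonal_factorization R _ _ n_subsets
  (low_monomials s (n * (t + t))) (fun u v => \prod_(i in u) qa_yes A (phi v) i)
  a (fun B v => monomial B (phi v))).
  move=> u /eqP card_u v; have [a0 ->] := ha u.
  rewrite [RHS]big_mkcond; apply: eq_bigr => B _; rewrite unfold_in /low_monomials.
  by case: leqP => // hB; rewrite a0 ?mul0r // card_u.
by move=> u v /eqP card_u /eqP card_v; apply: prod_qa_yes_neq0.
Qed.

Lemma ln_bin_bound (lam : R) : (0 < n)%N -> (n <= m)%N -> 0 < lam -> lam < 1 ->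
  n%:R * (ln m%:R - ln n%:R) <= s%:R * lam + (n * (t + t))%:R * - ln lam.
Proof.
move=> n0 le_nm lam0 lam1; set K := (n * (t + t))%N.
have n0R : 0 < n%:R :> R by rewrite ltr0n.
have m0R : 0 < m%:R :> R by rewrite ltr0n (leq_trans n0).
have ratio0 : 0 < m%:R / n%:R :> R by apply: divr_gt0.
have count := card_low_monomials_le s K (ltW lam0) (ltW lam1).
have exp_bound : (1 + lam) ^+ s <= expR (s%:R * lam).
  rewrite expRM_natl; apply: lerXn2r; last exact: expR_ge1Dx.
    by rewrite nnegrE addr_ge0 // ltW.
  by rewrite nnegrE expR_ge0.
have bound : lam ^+ K * (m%:R / n%:R) ^+ n <= expR (s%:R * lam).
  apply: le_trans (le_trans count exp_bound).
  apply: ler_wpM2l; first exact/exprn_ge0/ltW.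
  apply: le_trans (ratio_exp_le_bin _ le_nm) _.
  by rewrite ler_nat bin_le_card_low_monomials.
have lamK0 : 0 < lam ^+ K by apply: exprn_gt0.
have ratio_n0 : 0 < (m%:R / n%:R) ^+ n :> R by apply: exprn_gt0.
have : ln (lam ^+ K * (m%:R / n%:R) ^+ n) <= ln (expR (s%:R * lam)).
  by rewrite ler_ln ?posrE ?expR_gt0 ?mulr_gt0.
rewrite expRK lnM ?posrE // (lnXn _ lam0) (lnXn _ ratio0).
rewrite ln_div ?posrE // -[_ *+ K]mulr_natr -[_ *+ n]mulr_natr; lra.
Qed.

Lemma probes_ge_ln (d c lam : R) : (0 < n)%N -> (2 <= m)%N -> d < 1 ->
  n%:R <= m%:R `^ d -> s%:R <= c * n%:R * log2 (m%:R : R) ->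
  0 < lam -> lam < 1 -> c * lam <= (1 - d) * ln 2 / 2 ->
  (1 - d) * ln m%:R <= t%:R * (4 * - ln lam).
Proof.
move=> n_gt0 m_ge2 d_lt1 n_le s_le lam_gt0 lam_lt1 c_lam.
have n_gt0R : 0 < n%:R :> R by rewrite ltr0n.
have m_gt0 : (0 < m)%N by apply: leq_trans m_ge2.
have ln2_gt0 : 0 < ln (2 : R) by apply: ln_gt0; rewrite ltr1n.
have ln_m_gt0 : 0 < ln (m%:R : R) by apply: ln_gt0; rewrite ltr1n.
have ln_n_le : ln (n%:R : R) <= d * ln (m%:R : R).
  by rewrite -ln_powR ler_ln ?posrE ?powR_gt0 ?ltr0n.
have le_nm : (n <= m)%N.
  rewrite leqNgt; apply/negP => lt_mn.
  have : ln (m%:R : R) <= ln (n%:R : R).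
    by rewrite ler_ln ?posrE ?ltr0n ?m_gt0 // ler_nat ltnW.
  nra.
have s_lam : s%:R * lam <= n%:R * ln m%:R * (1 - d) / 2.
  have n_log2m_ge0 : 0 <= n%:R * log2 (m%:R : R).
    by rewrite mulr_ge0 ?divr_ge0 ?ltW.
  apply: le_trans (ler_wpM2r (ltW lam_gt0) s_le) _.
  rewrite (_ : _ * lam = n%:R * log2 (m%:R : R) * (c * lam)); last by ring.
  have -> : n%:R * ln m%:R * (1 - d) / 2 = n%:R * log2 (m%:R : R) * ((1 - d) * ln 2 / 2).
    by rewrite /log2; field; lra.
  by apply: ler_wpM2l.
have := ln_bin_bound n_gt0 le_nm lam_gt0 lam_lt1; rewrite natrM natrD => ln_bound.
have n_ln_n_le := ler_wpM2l (ltW n_gt0R) ln_n_le.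
rewrite -(ler_pM2l n_gt0R); lra.
Qed.

End OneSidedMembership.

Theorem mainTheorem7 (R : realType) (d c : R) :
  0 < d -> d < 1 -> 0 < c ->
  exists c' : R, 0 < c' /\
    forall (m n s w t : nat) (eps : R)
           (phi : {set 'I_m} -> 'I_s -> bool) (A : @qalgo R s w m t),
      (0 < n)%N -> (2 <= m)%N ->
      n%:R <= m%:R `^ d ->
      s%:R <= c * n%:R * log2 (m%:R : R) ->
      eps < 1 ->
      @one_sided_membership R m n s w t phi A eps ->
      c' * log2 (m%:R : R) <= t%:R.
Proof.
move=> d_gt0 d_lt1 c_gt0.
have ln2_gt0 : 0 < ln (2 : R) by apply: ln_gt0; lra.
pose mu := (1 - d) * ln (2 : R) / (2 * c).
have mu_gt0 : 0 < mu by apply: divr_gt0; [apply: mulr_gt0; lra | lra].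
pose lam := mu / (1 + mu).
have lam_gt0 : 0 < lam by apply: divr_gt0; lra.
have lam_lt1 : lam < 1 by rewrite ltr_pdivrMr; lra.
have c_lam : c * lam <= (1 - d) * ln 2 / 2.
  have -> : (1 - d) * ln 2 / 2 = c * mu by rewrite /mu; field; lra.
  by rewrite ler_pM2l // ler_pdivrMr; nra.
have Nln_lam_gt0 : 0 < - ln lam by rewrite oppr_gt0 -(ln1 R) ltr_ln ?posrE.
exists ((1 - d) * ln (2 : R) / (4 * - ln lam)); split.
  by apply: divr_gt0; [apply: mulr_gt0; lra | lra].
move=> m n s w t eps phi A n_gt0 m_ge2 n_le s_le eps_lt1 hmem.
have -> : (1 - d) * ln 2 / (4 * - ln lam) * log2 (m%:R : R) =
          (1 - d) * ln m%:R / (4 * - ln lam) by rewrite /log2; field; lra.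
rewrite ler_pdivrMr; last lra.
exact: probes_ge_ln eps_lt1 hmem _ _ _ n_gt0 m_ge2 d_lt1 n_le s_le lam_gt0 lam_lt1 c_lam.
Qed.
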